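(* Let $S$ be a uniform line VN with vertices $1,2,\dots,n$ (edges $\{i,i+1\}$, all demands $1$) and let $T$ be a tree PN on $n$ vertices with nonnegative edge costs. For an embedding $f$, consider the closed-form walk $f(1)\to f(2)\to\cdots\to f(n)$ in $T$ obtained by concatenating the unique tree paths between consecutive images. If there exists an embedding of $S$ on $T$ of minimum cost, then there exists a minimum-cost embedding $g$ of $S$ on $T$ such that in the walk $g(1)\to g(2)\to\cdots\to g(n)$ every edge of $T$ is traversed at most once in each direction.
   Context: Model. A physical network (PN) is an undirected connected graph $G=(V_G,E_G)$ with an edge cost function $t:E_G\to\mathbb{R}_{\ge 0}$. A virtual network (VN) is an undirected connected graph $S=(V_S,E_S)$ with $|V_S|=|V_G|=n$ and a demand function $w:E_S\to\mathbb{N}$. An embedding $f$ of $S$ on $G$ consists of a bijection $f_V:V_S\to V_G$ together with, for every edge $e=\{i,j\}\in E_S$, a single path $f_E(e)$ in $G$ between $f_V(i)$ and $f_V(j)$ (in a tree this path is unique). The cost of a path is the sum of the costs $t$ of its edges, and $\mathrm{Cost}(f)=\sum_{e\in E_S} w_e\cdot \mathrm{cost}(f_E(e))$. A uniform line is a path graph with all demands equal to $1$. *)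

From HB Require Import structures.
From mathcomp Require Import all_boot all_order all_algebra.
Set Implicit Arguments. Unset Strict Implicit. Unset Printing Implicit Defensive.
Import Order.TTheory GRing.Theory Num.Theory.
Local Open Scope ring_scope.

Definition simple_graph (V : finType) (e : rel V) : Prop :=
  symmetric e /\ irreflexive e.

Definition is_tree (V : finType) (e : rel V) : Prop :=
  [/\ simple_graph e,
      (forall x y : V, connect e x y) &
      (forall c : seq V, (3 <= size c)%N -> ~ ucycle e c)].

(* A (simple) path in the graph e from u to v, represented by the sequence p
   of vertices visited after u: u :: p is the vertex sequence. *)
Definition is_gpath (V : finType) (e : rel V) (u v : V) (p : seq V) : bool :=
  [&& path e u p, uniq (u :: p) & last u p == v].

Definition path_arcs (V : Type) (u : V) (p : seq V) : seq (V * V) :=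
  zip (u :: p) p.

Definition path_cost (R : numDomainType) (V : Type) (t : V -> V -> R)
    (u : V) (p : seq V) : R :=
  \sum_(a <- path_arcs u p) t a.1 a.2.

(* An embedding of the uniform line S on vertices 0, ..., n-1 (edges
   {i, i+1}) into the physical network (V, e): a bijection fV on vertices and,
   for every VN edge {i, i+1} (i.+1 < n), a path fE i in G from fV i to
   fV (i+1). *)
Record line_embedding (n : nat) (V : finType) := LineEmb {
  emb_V : 'I_n -> V;
  emb_E : nat -> seq V }.


Definition is_line_embedding (n : nat) (V : finType) (e : rel V)
    (f : line_embedding n V) : Prop :=
  bijective (emb_V f) /\
  forall (i j : 'I_n), val j = (val i).+1 ->
    is_gpath e (emb_V f i) (emb_V f j) (emb_E f i).

(* Cost of the embedding: sum over VN edges {i, i+1} (demand 1) of the cost of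
   the chosen path. *)
Definition line_cost (R : numDomainType) (n : nat) (V : finType)
    (t : V -> V -> R) (f : line_embedding n V) : R :=
  \sum_(i < n | ((val i).+1 < n)%N) path_cost t (emb_V f i) (emb_E f i).

Definition line_walk_arcs (n : nat) (V : finType) (f : line_embedding n V)
    : seq (V * V) :=
  flatten [seq path_arcs (emb_V f i) (emb_E f i)
          | i <- enum 'I_n & ((val i).+1 < n)%N].

Definition each_arc_at_most_once (n : nat) (V : finType)
    (f : line_embedding n V) : Prop :=
  forall u v : V, (count_mem (u, v) (line_walk_arcs f) <= 1)%N.

Definition min_cost_embedding (R : numDomainType) (n : nat) (V : finType)
    (e : rel V) (t : V -> V -> R) (f : line_embedding n V) : Prop :=
  is_line_embedding e f /\
  forall h : line_embedding n V, is_line_embedding e h ->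
    line_cost t f <= line_cost t h.

(** Suppose the arc (u, v) is traversed twice, on the paths f(i) ~> f(i+1)
    and f(j) ~> f(j+1) with i < j.  Reverse the order of the virtual vertices
    i+1, ..., j (a 2-opt move): the new end paths f(i) ~> f(j) and
    f(i+1) ~> f(j+1) swap the tails of the old ones at (u, v), followed by
    loop erasure, and the paths in between are traversed backwards.  With
    symmetric nonnegative costs this drops both copies of (u, v) without
    raising the cost and shortens the walk by two hops, so iterating from a
    minimum-cost embedding terminates in a minimum-cost embedding whose walk
    uses every arc at most once. *)

From mathcomp Require Import all_boot all_order all_algebra.
From mathcomp Require Import zify ring lra.
Set Implicit Arguments. Unset Strict Implicit. Unset Printing Implicit Defensive.
Import Order.TTheory GRing.Theory Num.Theory.
Local Open Scope ring_scope.

Lemma path_arcs_cons (T : Type) (x y : T) p :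
  path_arcs x (y :: p) = (x, y) :: path_arcs y p.
Proof. by []. Qed.

Lemma path_arcs_cat (T : Type) (x : T) p q :
  path_arcs x (p ++ q) = path_arcs x p ++ path_arcs (last x p) q.
Proof. by elim: p x => [|y p IH] x //=; rewrite !path_arcs_cons IH. Qed.

Lemma size_path_arcs (T : Type) (x : T) p : size (path_arcs x p) = size p.
Proof. by rewrite size_zip /=; lia. Qed.

Lemma last_rev_belast (T : Type) (x : T) p : last (last x p) (rev (belast x p)) = x.
Proof. by case: p => [|y p] //=; rewrite rev_cons last_rcons. Qed.

Lemma path_arcs_rev (T : Type) (x : T) p :
  path_arcs (last x p) (rev (belast x p)) = rev [seq (a.2, a.1) | a <- path_arcs x p].
Proof.
elim: p x => [|y p IH] x //.
rewrite -[last x _]/(last y p) -[belast x _]/(x :: belast y p) rev_cons -cats1.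
by rewrite (path_arcs_cat (last y p)) IH last_rev_belast path_arcs_cons map_cons rev_cons -cats1.
Qed.

Lemma path_arcs_edges (T : Type) (e : rel T) x p :
  path e x p -> all (fun a => e a.1 a.2) (path_arcs x p).
Proof. by elim: p x => [|y p IH] x //= /andP[-> /IH]. Qed.

Lemma mem_path_arcs_split (T : eqType) (x : T) p a :
  a \in path_arcs x p -> exists p1 p2, p = p1 ++ a.2 :: p2 /\ last x p1 = a.1.
Proof.
elim: p x => [|y p IH] x //; rewrite path_arcs_cons inE => /orP[/eqP->|].
  by exists [::], p.
by case/IH=> p1 [p2 [-> <-]]; exists (y :: p1), p2.
Qed.

Lemma count_path_arcs_uniq (T : eqType) (x : T) p a :
  uniq (x :: p) -> (count_mem a (path_arcs x p) <= 1)%N.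
Proof. by move=> uniq_xp; rewrite count_uniq_mem ?leq_b1 ?zip_uniql. Qed.

Lemma path_loop_erase (T : eqType) (e : rel T) x p :
  path e x p -> exists p', [/\ path e x p', uniq (x :: p'), last x p' = last x p
                              & subseq (path_arcs x p') (path_arcs x p)].
Proof.
elim: p x => [|y q IH] x; first by exists [::].
case/andP=> exy /IH[q' [q'_path q'_uniq q'_last q'_arcs]].
have xyq'_path : path e x (y :: q') by rewrite /= exy.
have xyq'_last : last x (y :: q') = last x (y :: q) := q'_last.
have xyq'_arcs : subseq (path_arcs x (y :: q')) (path_arcs x (y :: q)).
  by rewrite !path_arcs_cons /= eqxx.
have [x_in|x_notin] := boolP (x \in y :: q'); last first.
  by exists (y :: q'); split; rewrite /= ?x_notin.
case/splitPr: x_in q'_uniq xyq'_path xyq'_last xyq'_arcs => r1 r2.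
rewrite cat_uniq cat_path path_arcs_cat last_cat => /and3P[_ _ uniq_r2].
case/andP=> _ /andP[_ r2_path] r2_last r2_arcs.
exists r2; split=> //; apply: subseq_trans _ r2_arcs.
by apply: subseq_trans (suffix_subseq _ _); rewrite path_arcs_cons subseq_cons.
Qed.

Lemma gpath_rev (V : finType) (e : rel V) x y p :
  symmetric e -> is_gpath e x y p -> is_gpath e y x (rev (belast x p)).
Proof.
move=> e_sym /and3P[p_path p_uniq /eqP p_last].
rewrite /is_gpath -p_last rev_path last_rev_belast eqxx andbT.
rewrite (@eq_path _ _ e) ?p_path => [|a b]; last by rewrite e_sym.
by rewrite -rev_rcons -lastI rev_uniq.
Qed.

Section PathCost.

Variables (R : numDomainType) (T : eqType) (t : T -> T -> R).

Lemma path_cost_cons x y p : path_cost t x (y :: p) = t x y + path_cost t y p.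
Proof. by rewrite /path_cost path_arcs_cons big_cons. Qed.

Lemma path_cost_cat x p q :
  path_cost t x (p ++ q) = path_cost t x p + path_cost t (last x p) q.
Proof. by rewrite /path_cost path_arcs_cat big_cat. Qed.

Lemma path_cost_rev x p : (forall a b, t a b = t b a) ->
  path_cost t (last x p) (rev (belast x p)) = path_cost t x p.
Proof.
move=> t_sym; rewrite /path_cost path_arcs_rev big_rev big_map.
by apply: eq_bigr => -[a b] _; rewrite t_sym.
Qed.

Lemma path_cost_subseq (e : rel T) x p q :
  (forall a b, e a b -> 0 <= t a b) -> path e x q ->
  subseq (path_arcs x p) (path_arcs x q) -> path_cost t x p <= path_cost t x q.
Proof.
move=> t_ge0 q_path sub_pq; have [r perm_r] := perm_to_subseq sub_pq.
have q_edges := path_arcs_edges q_path.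
rewrite /path_cost (perm_big _ perm_r) big_cat /= lerDl big_seq sumr_ge0 // => a a_r.
by apply: t_ge0; apply: (allP q_edges); rewrite (perm_mem perm_r) mem_cat a_r orbT.
Qed.

Lemma path_cost_one (x : T) p : path_cost (fun _ _ => 1 : R) x p = (size p)%:R.
Proof. by rewrite /path_cost -(size_path_arcs x) -sum1_size natr_sum. Qed.

End PathCost.

Lemma gpath_uncross (R : realDomainType) (V : finType) (e : rel V)
    (a b c d u v : V) p q :
  symmetric e -> is_gpath e a b p -> is_gpath e c d q ->
  (u, v) \in path_arcs a p -> (u, v) \in path_arcs c q ->
  exists Q1 Q2, [/\ is_gpath e a c Q1, is_gpath e b d Q2 &
    forall t : V -> V -> R, (forall y z, t y z = t z y) ->
      (forall y z, e y z -> 0 <= t y z) ->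
      path_cost t a Q1 + path_cost t b Q2 + t u v *+ 2
        <= path_cost t a p + path_cost t c q].
Proof.
move=> e_sym /and3P[p_path _ /eqP p_last] /and3P[q_path _ /eqP q_last].
case/mem_path_arcs_split=> p1 [p2 [def_p /= p1_last]].
case/mem_path_arcs_split=> q1 [q2 [def_q /= q1_last]].
move: p_path q_path p_last q_last; rewrite def_p def_q !cat_path !last_cat /=.
rewrite p1_last q1_last => /and3P[p1_path _ p2_path] /and3P[q1_path _ q2_path].
move=> p2_last q2_last.
have rev_path_e s y : path e y s -> path e (last y s) (rev (belast y s)).
  by rewrite rev_path (@eq_path _ _ e) // => z1 z2; rewrite e_sym.
pose W1 := p1 ++ rev (belast c q1).
pose W2 := rev (belast v p2) ++ q2.
have W1_path : path e a W1.
  by rewrite cat_path p1_path p1_last -q1_last rev_path_e.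
have W2_path : path e b W2.
  by rewrite cat_path -p2_last rev_path_e //= last_rev_belast.
have [Q1 [Q1_path Q1_uniq Q1_last Q1_arcs]] := path_loop_erase W1_path.
have [Q2 [Q2_path Q2_uniq Q2_last Q2_arcs]] := path_loop_erase W2_path.
exists Q1, Q2; split.
- by rewrite /is_gpath Q1_path Q1_uniq Q1_last last_cat p1_last -q1_last last_rev_belast eqxx.
- by rewrite /is_gpath Q2_path Q2_uniq Q2_last last_cat -p2_last last_rev_belast q2_last eqxx.
move=> t t_sym t_ge0.
have W1_cost : path_cost t a W1 = path_cost t a p1 + path_cost t c q1.
  by rewrite path_cost_cat p1_last -q1_last path_cost_rev.
have W2_cost : path_cost t b W2 = path_cost t v p2 + path_cost t v q2.
  by rewrite path_cost_cat -p2_last path_cost_rev // last_rev_belast.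
have := path_cost_subseq t_ge0 W1_path Q1_arcs.
have := path_cost_subseq t_ge0 W2_path Q2_arcs.
rewrite W1_cost W2_cost !path_cost_cat !path_cost_cons p1_last q1_last mulr2n.
lra.
Qed.

Lemma sum_nat_gt1_two_indices m (c : nat -> nat) :
  (forall k, (k < m)%N -> (c k <= 1)%N) -> (1 < \sum_(0 <= k < m) c k)%N ->
  exists i j, [/\ (i < j)%N, (j < m)%N, (0 < c i)%N & (0 < c j)%N].
Proof.
elim: m => [|m IH] c_le1; first by rewrite big_geq.
rewrite big_nat_recr //=.
have [gt1 _|le1 gt1] := ltnP 1 (\sum_(0 <= k < m) c k).
  have [k lt_km|i [j [lt_ij lt_jm ci cj]]] := IH _ gt1; first exact/c_le1/leqW.
  by exists i, j; split=> //; apply: leqW.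
have cm := c_le1 m (ltnSn m).
have : (\sum_(0 <= k < m) c k != 0)%N by lia.
rewrite sum_nat_seq_neq0 => /hasP[i]; rewrite mem_index_iota => /andP[_ lt_im] /= ci.
by exists i, m; split=> //; lia.
Qed.

Lemma big_nat_split2 (M : nmodType) (F : nat -> M) i j m :
  (i < j)%N -> (j < m)%N ->
  \sum_(0 <= k < m) F k = \sum_(0 <= k < i) F k + F i
    + \sum_(i.+1 <= k < j) F k + F j + \sum_(j.+1 <= k < m) F k.
Proof.
move=> lt_ij lt_jm; have lt_im := ltn_trans lt_ij lt_jm.
rewrite (@big_cat_nat _ _ _ i) ?(ltnW lt_im) // (@big_ltn _ _ _ i) //.
rewrite (@big_cat_nat _ _ _ j i.+1) ?(ltnW lt_jm) // (@big_ltn _ _ _ j) //.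
by rewrite /= !addrA.
Qed.

Section SegmentReversal.

Variables i j : nat.

Definition seg_rev (k : nat) : nat := if (i < k <= j)%N then (i + j.+1 - k)%N else k.

Lemma seg_revK : involutive seg_rev.
Proof.
move=> k; rewrite /seg_rev; have [k_in|k_out] := boolP (i < k <= j)%N.
  by rewrite ifT; lia.
by rewrite (negbTE k_out).
Qed.

Lemma seg_rev_le m k : (j < m)%N -> (k <= m)%N -> (seg_rev k <= m)%N.
Proof. by rewrite /seg_rev; case: ifP; lia. Qed.

Lemma seg_rev_out k : ~~ (i < k <= j)%N -> seg_rev k = k.
Proof. by rewrite /seg_rev => /negbTE->. Qed.

Hypothesis lt_ij : (i < j)%N.

Lemma seg_rev_ends :
  [/\ seg_rev i = i, seg_rev i.+1 = j, seg_rev j = i.+1 & seg_rev j.+1 = j.+1].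
Proof. by rewrite /seg_rev; split; case: ifP; lia. Qed.

Lemma seg_rev_mid k : (i < k < j)%N -> seg_rev k = (seg_rev k.+1).+1.
Proof. by rewrite /seg_rev; case: ifP; case: ifP; lia. Qed.

Variables (V : finType) (e : rel V) (m : nat) (x : nat -> V) (P : nat -> seq V).
Variables Q1 Q2 : seq V.
Hypotheses (lt_jm : (j < m)%N)
  (P_gpath : forall k, (k < m)%N -> is_gpath e (x k) (x k.+1) (P k)).

(* Q1 and Q2 are meant to be paths x i ~> x j and x (i+1) ~> x (j+1). *)
Definition splice_path (k : nat) : seq V :=
  if k == i then Q1 else if k == j then Q2
  else if (i < k < j)%N then rev (belast (x (seg_rev k.+1)) (P (seg_rev k.+1)))
  else P k.

Lemma splice_path_gpath k : symmetric e ->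
  is_gpath e (x i) (x j) Q1 -> is_gpath e (x i.+1) (x j.+1) Q2 -> (k < m)%N ->
  is_gpath e (x (seg_rev k)) (x (seg_rev k.+1)) (splice_path k).
Proof.
move=> e_sym Q1_gpath Q2_gpath lt_km; rewrite /splice_path.
have [rev_i rev_i1 rev_j rev_j1] := seg_rev_ends.
have [->|ne_ki] := eqVneq k i; first by rewrite rev_i rev_i1.
have [->|ne_kj] := eqVneq k j; first by rewrite rev_j rev_j1.
case: ifP => k_mid.
  rewrite (seg_rev_mid k_mid); apply: gpath_rev => //; apply: P_gpath.
  by have := seg_rev_le lt_jm (ltnW lt_km); rewrite (seg_rev_mid k_mid).
by rewrite !seg_rev_out ?P_gpath //; apply/negP; lia.
Qed.

Lemma splice_path_cost (R : numDomainType) (t : V -> V -> R) :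
  (forall a b, t a b = t b a) ->
  \sum_(0 <= k < m) path_cost t (x (seg_rev k)) (splice_path k)
    + (path_cost t (x i) (P i) + path_cost t (x j) (P j))
  = \sum_(0 <= k < m) path_cost t (x k) (P k)
    + (path_cost t (x i) Q1 + path_cost t (x i.+1) Q2).
Proof.
move=> t_sym; pose G k := path_cost t (x k) (P k).
pose H k := path_cost t (x (seg_rev k)) (splice_path k).
have [rev_i _ rev_j _] := seg_rev_ends.
have out_eq k : (k < i)%N || (j < k)%N -> H k = G k.
  move=> k_out; rewrite /H /splice_path seg_rev_out; last by apply/negP; lia.
  by rewrite ifN; last lia; rewrite ifN; last lia; rewrite ifF //; lia.
have low : \sum_(0 <= k < i) H k = \sum_(0 <= k < i) G k.
  by apply: eq_big_nat => k /andP[_ lt_ki]; rewrite out_eq ?lt_ki.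
have high : \sum_(j.+1 <= k < m) H k = \sum_(j.+1 <= k < m) G k.
  by apply: eq_big_nat => k /andP[lt_jk _]; rewrite out_eq ?lt_jk ?orbT.
have mid : \sum_(i.+1 <= k < j) H k = \sum_(i.+1 <= k < j) G k.
  rewrite [RHS]big_nat_rev; apply: eq_big_nat => k /andP[lt_ik lt_kj].
  have k_mid : (i < k < j)%N by lia.
  have -> : (i.+1 + j - k.+1)%N = seg_rev k.+1 by rewrite /seg_rev ifT; lia.
  have lt_k'm : (seg_rev k.+1 < m)%N by rewrite /seg_rev ifT; lia.
  have [_ _ /eqP P_last] := and3P (P_gpath lt_k'm).
  rewrite /H /splice_path ifN; last lia; rewrite ifN; last lia; rewrite k_mid.
  by rewrite (seg_rev_mid k_mid) -P_last path_cost_rev.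
rewrite (big_nat_split2 H lt_ij lt_jm) (big_nat_split2 G lt_ij lt_jm) low mid high.
rewrite /H /splice_path !eqxx ifN; last lia; rewrite rev_i rev_j.
rewrite -/(G i) -/(G j); ring.
Qed.

End SegmentReversal.

Section LineEmbedding.

Variable V : finType.

Definition line_length n (f : line_embedding n V) : nat :=
  \sum_(i < n | ((val i).+1 < n)%N) size (emb_E f i).

Lemma line_cost_one (R : numDomainType) n (f : line_embedding n V) :
  line_cost (fun _ _ => 1 : R) f = (line_length f)%:R.
Proof. by rewrite /line_cost natr_sum; apply: eq_bigr => i _; rewrite path_cost_one. Qed.

Variable m : nat.
Implicit Type f : line_embedding m.+1 V.

Lemma big_line_edges (M : Type) (idx : M) (op : Monoid.law idx) (F : 'I_m.+1 -> M) :
  \big[op/idx]_(i < m.+1 | ((val i).+1 < m.+1)%N) F i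
    = \big[op/idx]_(0 <= k < m) F (inord k).
Proof.
rewrite [LHS]big_mkcond big_ord_recr /= ltnn Monoid.mulm1 big_mkord.
apply: eq_bigr => k _; rewrite ltnS ltn_ord; congr F; apply: ord_inj.
by rewrite /= inordK //; exact: leqW.
Qed.

Lemma line_cost_nat (R : numDomainType) (t : V -> V -> R) f :
  line_cost t f = \sum_(0 <= k < m) path_cost t (emb_V f (inord k)) (emb_E f k).
Proof.
rewrite /line_cost big_line_edges; apply: eq_big_nat => k /andP[_ lt_km].
by rewrite inordK //; apply: ltnW.
Qed.

Lemma count_line_walk_arcs f a :
  count_mem a (line_walk_arcs f)
    = \sum_(0 <= k < m) count_mem a (path_arcs (emb_V f (inord k)) (emb_E f k)).
Proof.
rewrite /line_walk_arcs count_flatten sumnE !big_map big_filter big_enum_cond /=.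
rewrite big_line_edges; apply: eq_big_nat => k /andP[_ lt_km].
by rewrite inordK //; apply: ltnW.
Qed.

Lemma line_embedding_gpath (e : rel V) f : is_line_embedding e f ->
  forall k, (k < m)%N -> is_gpath e (emb_V f (inord k)) (emb_V f (inord k.+1)) (emb_E f k).
Proof.
case=> _ f_paths k lt_km; have := f_paths (inord k) (inord k.+1).
rewrite inordK; last by apply: ltnW.
by apply; rewrite /= !inordK //; lia.
Qed.

End LineEmbedding.

Lemma line_embedding_uncross (R : realDomainType) n (V : finType) (e : rel V)
    (f : line_embedding n V) u v :
  symmetric e -> is_line_embedding e f ->
  (1 < count_mem (u, v) (line_walk_arcs f))%N ->
  exists g : line_embedding n V, [/\ is_line_embedding e g, e u v &
    forall t : V -> V -> R, (forall a b, t a b = t b a) ->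
      (forall a b, e a b -> 0 <= t a b) ->
      line_cost t g + t u v *+ 2 <= line_cost t f].
Proof.
case: n f => [|m] f e_sym f_emb; first by rewrite /line_walk_arcs enum_ord0.
pose x k := emb_V f (inord k).
have P_gpath := line_embedding_gpath f_emb.
have arcs_once k : (k < m)%N -> (count_mem (u, v) (path_arcs (x k) (emb_E f k)) <= 1)%N.
  by move=> /P_gpath/and3P[_ /count_path_arcs_uniq].
rewrite count_line_walk_arcs => /(sum_nat_gt1_two_indices arcs_once).
case=> i [j [lt_ij lt_jm]]; rewrite -!has_count !has_pred1 => uv_i uv_j.
have lt_im := ltn_trans lt_ij lt_jm.
have [Q1 [Q2 [Q1_gpath Q2_gpath Q_cost]]] :=
  gpath_uncross R e_sym (P_gpath i lt_im) (P_gpath j lt_jm) uv_i uv_j.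
have seg_rev_ord (k : 'I_m.+1) : (seg_rev i j k < m.+1)%N.
  exact: seg_rev_le lt_jm (ltn_ord k).
pose sigma k := Ordinal (seg_rev_ord k).
have sigmaK : involutive sigma by move=> k; apply: ord_inj; rewrite /= seg_revK.
pose g := LineEmb (emb_V f \o sigma) (splice_path i j x (emb_E f) Q1 Q2).
have gV (k : 'I_m.+1) : emb_V g k = x (seg_rev i j k).
  by rewrite /= /x; congr (emb_V f); apply: val_inj; rewrite /= inordK.
exists g; split.
- split=> [|a b ab]; first exact: bij_comp (proj1 f_emb) (inv_bij sigmaK).
  rewrite !gV ab; apply: (splice_path_gpath lt_ij lt_jm P_gpath) => //.
  by rewrite -ltnS -ab ltn_ord.
- exact: (allP (path_arcs_edges (proj1 (andP (P_gpath i lt_im)))) _ uv_i).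
move=> t t_sym t_ge0; rewrite !line_cost_nat.
have -> : \sum_(0 <= k < m) path_cost t (emb_V g (inord k)) (emb_E g k)
    = \sum_(0 <= k < m) path_cost t (x (seg_rev i j k)) (splice_path i j x (emb_E f) Q1 Q2 k).
  by apply: eq_big_nat => k /andP[_ lt_km]; rewrite gV inordK //; apply: ltnW.
have := splice_path_cost lt_ij Q1 Q2 lt_jm P_gpath t_sym.
have := Q_cost t t_sym t_ge0.
lra.
Qed.

Theorem lemma2 (R : realFieldType) (n : nat) (V : finType) (e : rel V)
    (t : V -> V -> R) :
  #|V| = n ->
  is_tree e ->
  (forall u v : V, t u v = t v u) ->
  (forall u v : V, e u v -> 0 <= t u v) ->
  (exists f : line_embedding n V, min_cost_embedding e t f) ->
  exists g : line_embedding n V,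
    min_cost_embedding e t g /\ each_arc_at_most_once g.
Proof.
move=> _ [[e_sym _] _ _] t_sym t_ge0 [f f_min].
have [N lt_fN] := ubnP (line_length f).
elim: N f lt_fN f_min => // N IH f lt_fN [f_emb f_le].
have [[u v] /= uv_twice|at_most_once] :=
  pickP (fun a => 1 < count_mem a (line_walk_arcs f))%N; last first.
  by exists f; split=> // u v; rewrite leqNgt at_most_once.
have [g [g_emb uv_edge g_cost]] := line_embedding_uncross R e_sym f_emb uv_twice.
apply: (IH g).
  have := g_cost (fun _ _ => 1) (fun _ _ => erefl) (fun _ _ _ => ler01).
  by rewrite !line_cost_one -natrD ler_nat; lia.
split=> // h h_emb; apply: le_trans (f_le h h_emb).
by apply: le_trans (g_cost t t_sym t_ge0); rewrite lerDl mulrn_wge0 ?t_ge0.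
Qed.
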